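(* Let $n\ge3$ and let $N$ be the normal closure in $FVB_n$ of the subgroup $\langle(\rho_i\sigma_{i+1})^6\mid i=1,\dots,n-2\rangle$. Then $N\le\ker(\theta)\le FVP_n\cap FH_n$.
   Context: $FVB_n$ is the flat virtual braid group: generators $\sigma_1,\dots,\sigma_{n-1},\rho_1,\dots,\rho_{n-1}$, relations $\sigma_i\sigma_j=\sigma_j\sigma_i$, $\rho_i\rho_j=\rho_j\rho_i$, $\sigma_i\rho_j=\rho_j\sigma_i$ for $|i-j|\ge2$; $\sigma_i\sigma_{i+1}\sigma_i=\sigma_{i+1}\sigma_i\sigma_{i+1}$; $\rho_i\rho_{i+1}\rho_i=\rho_{i+1}\rho_i\rho_{i+1}$; $\rho_i\rho_{i+1}\sigma_i=\sigma_{i+1}\rho_i\rho_{i+1}$; $\rho_i^2=\sigma_i^2=1$. $\iota_1:FVB_n\to S_n$ sends $\sigma_i,\rho_i\mapsto(i,i+1)$; $\iota_2:FVB_n\to S_n$ sends $\sigma_i\mapsto1$, $\rho_i\mapsto(i,i+1)$; $FVP_n=\ker\iota_1$, $FH_n=\ker\iota_2$. $F_{2n}$ is free on $x_1,\dots,x_n,y_1,\dots,y_n$ and $\theta:FVB_n\to{\rm Aut}(F_{2n})$ is the homomorphism with $\theta(\sigma_i):x_i\mapsto x_{i+1}y_{i+1},\ x_{i+1}\mapsto x_iy_{i+1}^{-1}$ and $\theta(\rho_i):x_i\leftrightarrow x_{i+1},\ y_i\leftrightarrow y_{i+1}$, other generators fixed; automorphisms compose on the right, $(fg)(x)=g(f(x))$.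 *)

(* Finitely presented groups are modelled by words and an
   explicitly generated congruence; free groups by words and free reduction. *)
From mathcomp Require Import all_boot all_order all_fingroup.
Set Implicit Arguments. Unset Strict Implicit. Unset Printing Implicit Defensive.

(* A generator is (is_rho, i): (false,i) = sigma_i, (true,i) = rho_i.  *)
(* A letter is (inv, g): inv = true means g^{-1}.                      *)
Definition gen := (bool * nat)%type.
Definition letter := (bool * gen)%type.
Definition word := seq letter.

Definition sig (i : nat) : word := [:: (false, (false, i))].
Definition rho (i : nat) : word := [:: (false, (true, i))].

Definition linv (a : letter) : letter := (~~ a.1, a.2).
Definition winv (w : word) : word := rev (map linv w).

Definition valid_letter (n : nat) (a : letter) : bool := (1 <= a.2.2 <= n.-1).
Definition valid (n : nat) (w : word) : bool := all (valid_letter n) w.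

Inductive fvb_rel (n : nat) : word -> word -> Prop :=
| rel_ss i j : 1 <= i <= n.-1 -> 1 <= j <= n.-1 -> ((i + 2 <= j) || (j + 2 <= i)) ->
    fvb_rel n (sig i ++ sig j) (sig j ++ sig i)
| rel_rr i j : 1 <= i <= n.-1 -> 1 <= j <= n.-1 -> ((i + 2 <= j) || (j + 2 <= i)) ->
    fvb_rel n (rho i ++ rho j) (rho j ++ rho i)
| rel_sr i j : 1 <= i <= n.-1 -> 1 <= j <= n.-1 -> ((i + 2 <= j) || (j + 2 <= i)) ->
    fvb_rel n (sig i ++ rho j) (rho j ++ sig i)
| rel_sss i : 1 <= i <= n.-2 ->
    fvb_rel n (sig i ++ sig i.+1 ++ sig i) (sig i.+1 ++ sig i ++ sig i.+1)
| rel_rrr i : 1 <= i <= n.-2 ->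
    fvb_rel n (rho i ++ rho i.+1 ++ rho i) (rho i.+1 ++ rho i ++ rho i.+1)
| rel_rrs i : 1 <= i <= n.-2 ->
    fvb_rel n (rho i ++ rho i.+1 ++ sig i) (sig i.+1 ++ rho i ++ rho i.+1)
| rel_r2 i : 1 <= i <= n.-1 -> fvb_rel n (rho i ++ rho i) [::]
| rel_s2 i : 1 <= i <= n.-1 -> fvb_rel n (sig i ++ sig i) [::].

Inductive fvb_eqv (n : nat) : word -> word -> Prop :=
| eqv_refl u : fvb_eqv n u u
| eqv_sym u v : fvb_eqv n u v -> fvb_eqv n v u
| eqv_trans u v w : fvb_eqv n u v -> fvb_eqv n v w -> fvb_eqv n u w
| eqv_ctx a b u v : valid n a -> valid n b ->
    fvb_eqv n u v -> fvb_eqv n (a ++ u ++ b) (a ++ v ++ b)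
| eqv_cancel x : valid_letter n x -> fvb_eqv n [:: x; linv x] [::]
| eqv_rel u v : fvb_rel n u v -> fvb_eqv n u v.

Fixpoint wpow (w : word) (k : nat) : word :=
  if k is k'.+1 then w ++ wpow w k' else [::].

Definition relator6 (i : nat) : word := wpow (rho i ++ sig i.+1) 6.

Inductive inN (n : nat) : word -> Prop :=
| N_gen i : 1 <= i <= n.-2 -> inN n (relator6 i)
| N_one : inN n [::]
| N_mul u v : inN n u -> inN n v -> inN n (u ++ v)
| N_inv u : inN n u -> inN n (winv u)
| N_conj g u : valid n g -> inN n u -> inN n (g ++ u ++ winv g)
| N_eqv u v : fvb_eqv n u v -> inN n u -> inN n v.

(* k in {1..n} is the ordinal k-1.                                      *)
Definition transp (n i : nat) : {perm 'I_n} :=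
  match @insub nat (fun k => k < n) _ i.-1, @insub nat (fun k => k < n) _ i with
  | Some a, Some b => tperm a b
  | _, _ => 1%g
  end.

Definition gen_perm1 (n : nat) (g : gen) : {perm 'I_n} := transp n g.2.
Definition gen_perm2 (n : nat) (g : gen) : {perm 'I_n} :=
  if g.1 then transp n g.2 else 1%g.

Definition word_perm (n : nat) (f : gen -> {perm 'I_n}) (w : word) : {perm 'I_n} :=
  foldr (fun a p => ((if a.1 then (f a.2)^-1 else f a.2) * p)%g) 1%g w.

Definition iota1 (n : nat) (w : word) : {perm 'I_n} := word_perm (gen_perm1 n) w.
Definition iota2 (n : nat) (w : word) : {perm 'I_n} := word_perm (gen_perm2 n) w.

(* A variable is (is_y, j); a free letter is (inv, var).               *)
Definition var := (bool * nat)%type.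
Definition fletter := (bool * var)%type.
Definition fword := seq fletter.

Definition X (j : nat) : fletter := (false, (false, j)).
Definition Y (j : nat) : fletter := (false, (true, j)).
Definition Yinv (j : nat) : fletter := (true, (true, j)).

(* free reduction; two words represent the same element of F_{2n} iff
   their reductions coincide *)
Definition fred (w : fword) : fword :=
  foldr (fun a acc => match acc with
                      | b :: r => if (a.2 == b.2) && (a.1 != b.1) then r else a :: acc
                      | [::] => [:: a] end) [::] w.

Definition finv (w : fword) : fword := rev (map (fun l : fletter => (~~ l.1, l.2)) w).

Definition fsubst (f : var -> fword) (w : fword) : fword :=
  flatten (map (fun l : fletter => if l.1 then finv (f l.2) else f l.2) w).

Definition theta_sigma (i : nat) (v : var) : fword :=
  if ~~ v.1 && (v.2 == i) then [:: X i.+1; Y i.+1]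
  else if ~~ v.1 && (v.2 == i.+1) then [:: X i; Yinv i.+1]
  else [:: (false, v)].

Definition theta_rho (i : nat) (v : var) : fword :=
  if v.2 == i then [:: (false, (v.1, i.+1))]
  else if v.2 == i.+1 then [:: (false, (v.1, i))]
  else [:: (false, v)].

Definition theta_gen (g : gen) : var -> fword :=
  if g.1 then theta_rho g.2 else theta_sigma g.2.

(* theta(sigma_i) and theta(rho_i) are involutions of F_{2n}, so
   theta(g^{-1}) = theta(g)^{-1} = theta(g). *)
Definition theta_letter (a : letter) : var -> fword := theta_gen a.2.

(* automorphisms compose on the right: theta(a_1 ... a_k)(v)
   = theta(a_k)( ... theta(a_1)(v) ...). *)
Definition theta (w : word) (v : var) : fword :=
  foldl (fun u a => fsubst (theta_letter a) u) [:: (false, v)] w.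

Definition in_ker_theta (n : nat) (w : word) : Prop :=
  forall (b : bool) (j : nat), 1 <= j <= n -> fred (theta w (b, j)) = [:: (false, (b, j))].

(** theta respects every defining relation of FVB_n (a finite case analysis on
    indices), so it is a homomorphism out of FVB_n; the relator
    (rho_i sigma_(i+1))^6 acts trivially on F_2n (by shift invariance of theta
    it suffices to compute this for i = 1), hence so does its normal closure N.

    Conversely, theta(w) maps y_k to y_(iota2(w) k) and x_k to a word whose
    only x-letter is x_(iota1(w) k).  Free reduction preserves the parity of
    the number of occurrences of each generator, so if theta(w) is the identity
    then iota1(w) and iota2(w) fix every point. *)

From mathcomp Require Import all_boot all_order all_fingroup.
From mathcomp Require Import zify.

Set Implicit Arguments.
Unset Strict Implicit.
Unset Printing Implicit Defensive.

(** * Free reduction *)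

Definition cancels (a b : fletter) : bool := (a.2 == b.2) && (a.1 != b.1).

Definition fpush (a : fletter) (r : fword) : fword :=
  if r is b :: r' then (if cancels a b then r' else a :: r) else [:: a].

Definition flinv (a : fletter) : fletter := (~~ a.1, a.2).

Fixpoint reduced (w : fword) : bool :=
  if w is a :: ((b :: _) as r) then ~~ cancels a b && reduced r else true.

Lemma fred_cons a u : fred (a :: u) = fpush a (fred u).
Proof. by []. Qed.

Lemma fred_cat u v : fred (u ++ v) = foldr fpush (fred v) u.
Proof. by rewrite /fred foldr_cat. Qed.

Lemma reduced_behead a r : reduced (a :: r) -> reduced r.
Proof. by case: r => //= b r /andP[]. Qed.

Lemma reduced_fpush a r : reduced r -> reduced (fpush a r).
Proof.
case: r => [|b r] //= red_br.
case: ifP => [_|not_canc]; first exact: reduced_behead red_br.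
by rewrite /= not_canc.
Qed.

Lemma reduced_foldr r s : reduced r -> reduced (foldr fpush r s).
Proof. by move=> red_r; elim: s => //= a s; apply: reduced_fpush. Qed.

Lemma reduced_fred u : reduced (fred u).
Proof. exact: reduced_foldr. Qed.

Lemma fred_id r : reduced r -> fred r = r.
Proof.
elim: r => //= a r IHr red_ar.
rewrite IHr; last exact: reduced_behead red_ar.
case: r red_ar {IHr} => //= b r /andP[not_canc _].
by move: not_canc; rewrite /cancels => /negbTE ->.
Qed.

Lemma cancelsE a b : cancels a b -> b = flinv a.
Proof. by case: a b => [a1 a2] [b1 b2] /andP[/= /eqP ->]; case: a1 b1 => [] []. Qed.

Lemma fpushK a r : reduced r -> fpush a (fpush (flinv a) r) = r.
Proof.
case: a => s x; case: r => [|b r] /=; first by rewrite /cancels /= eqxx; case: s.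
case: ifP => [canc_b|not_canc]; last by move: not_canc; rewrite /= /cancels /= eqxx; case: s.
have -> : b = (s, x) by rewrite (cancelsE (a:=(~~ s, x)) canc_b) /flinv /= negbK.
by case: r => [|c r] //= /andP[]; rewrite /cancels /= => /negbTE ->.
Qed.

Lemma foldr_fpush r a s : reduced r ->
  foldr fpush r (fpush a s) = fpush a (foldr fpush r s).
Proof.
move=> red_r; case: s => [|b s] //=.
case: ifP => // /cancelsE ->.
by rewrite fpushK //; apply: reduced_foldr.
Qed.

Lemma foldr_fpush_fred r u : reduced r -> foldr fpush r u = foldr fpush r (fred u).
Proof. by move=> red_r; elim: u => //= a u ->; rewrite -foldr_fpush. Qed.

Lemma fred_catl u v : fred (u ++ v) = fred (fred u ++ v).
Proof. by rewrite !fred_cat -foldr_fpush_fred //; apply: reduced_fred. Qed.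

Lemma fred_catr u v : fred (u ++ v) = fred (u ++ fred v).
Proof. by rewrite !fred_cat (fred_id (reduced_fred v)). Qed.

Lemma odd_count_fred (P : pred fletter) u :
  (forall a b : fletter, a.2 = b.2 -> P a = P b) ->
  odd (count P (fred u)) = odd (count P u).
Proof.
move=> P_var; elim: u => // a u IHu.
rewrite fred_cons [count _ (a :: u)]/= oddD -IHu.
case: (fred u) => [|b r] /=; first by rewrite addn0 addbF.
case: ifP => [/andP[/eqP ab_var _]|_] /=; last by rewrite oddD.
by rewrite (P_var _ _ ab_var) oddD addbA addbb.
Qed.

Definition feq (u v : fword) : Prop := fred u = fred v.

Lemma feq_cat u u' v v' : feq u u' -> feq v v' -> feq (u ++ v) (u' ++ v').
Proof.
rewrite /feq => eq_u eq_v.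
by rewrite fred_catl eq_u -fred_catl fred_catr eq_v -fred_catr.
Qed.

Lemma finv_cat u v : finv (u ++ v) = finv v ++ finv u.
Proof. by rewrite /finv map_cat rev_cat. Qed.

Lemma finv_cons a u : finv (a :: u) = finv u ++ [:: flinv a].
Proof. by rewrite /finv /= rev_cons cats1. Qed.

Lemma finvK : involutive finv.
Proof.
move=> u; rewrite /finv map_rev revK -map_comp map_id_in // => -[s x] _ /=.
by rewrite negbK.
Qed.

Lemma fred_cat_finv u : fred (u ++ finv u) = [::].
Proof.
elim: u => //= a u IHu.
rewrite finv_cons catA fred_catl IHu /=.
by case: a => [[] x] /=; rewrite eqxx.
Qed.

Lemma fred_finv_cat u : fred (finv u ++ u) = [::].
Proof. by rewrite -{2}(finvK u) fred_cat_finv. Qed.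

Lemma feq_finv u v : feq u v -> feq (finv u) (finv v).
Proof.
rewrite /feq => eq_uv.
have -> : fred (finv u) = fred (finv u ++ (v ++ finv v)).
  by rewrite fred_catr fred_cat_finv cats0.
by rewrite catA fred_catl (fred_catr (finv u) v) -eq_uv -fred_catr fred_finv_cat.
Qed.

Lemma fsubst_cons f a u :
  fsubst f (a :: u) = (if a.1 then finv (f a.2) else f a.2) ++ fsubst f u.
Proof. by []. Qed.

Lemma fsubst_cat f u v : fsubst f (u ++ v) = fsubst f u ++ fsubst f v.
Proof. by rewrite /fsubst map_cat flatten_cat. Qed.

Lemma fsubst_finv f u : fsubst f (finv u) = finv (fsubst f u).
Proof.
elim: u => [|a u IHu] //.
rewrite finv_cons fsubst_cat IHu fsubst_cons finv_cat /= cats0.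
by case: a => [[] x] /=; rewrite ?finvK.
Qed.

Lemma fsubst_comp g f u :
  fsubst g (fsubst f u) = fsubst (fun x => fsubst g (f x)) u.
Proof.
elim: u => [|a u IHu] //.
by rewrite !fsubst_cons fsubst_cat IHu; case: a.1; rewrite ?fsubst_finv.
Qed.

Lemma fsubst1 u : fsubst (fun x => [:: (false, x)]) u = u.
Proof. by elim: u => [|[[] x] u IHu] //; rewrite fsubst_cons IHu. Qed.

Lemma eq_fsubst f g : f =1 g -> fsubst f =1 fsubst g.
Proof. by move=> eq_fg; elim=> [|a u IHu] //; rewrite !fsubst_cons IHu eq_fg. Qed.

Lemma fred_fsubst_fpush f a s :
  fred (fsubst f (fpush a s)) = fred (fsubst f (a :: s)).
Proof.
case: s => [|b s] //=; case: ifP => // /cancelsE ->.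
rewrite fsubst_cons [fsubst f (_ :: _)]fsubst_cons catA fred_catl.
by case: a => [[] x] /=; rewrite ?fred_finv_cat ?fred_cat_finv.
Qed.

Lemma fred_fsubst f u : fred (fsubst f u) = fred (fsubst f (fred u)).
Proof.
elim: u => [|a u IHu] //.
by rewrite fred_cons fred_fsubst_fpush !fsubst_cons fred_catr IHu -fred_catr.
Qed.

Lemma feq_fsubst f u v : feq u v -> feq (fsubst f u) (fsubst f v).
Proof. by rewrite /feq fred_fsubst => ->; rewrite -fred_fsubst. Qed.

Lemma feq_fsubst_fun f g u :
  (forall x, feq (f x) (g x)) -> feq (fsubst f u) (fsubst g u).
Proof.
move=> eq_fg; elim: u => [|a u IHu] //.
rewrite !fsubst_cons; apply: feq_cat => //.
by case: a.1; rewrite ?eq_fg //; apply: feq_finv.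
Qed.

(** * theta factors through FVB_n *)

Lemma foldl_theta w u :
  foldl (fun u a => fsubst (theta_letter a) u) u w = fsubst (theta w) u.
Proof.
elim: w u => [|a w IHw] u /=; first by rewrite fsubst1.
rewrite IHw fsubst_comp; apply: eq_fsubst => x.
by rewrite /theta /= IHw fsubst_cons /= cats0.
Qed.

Lemma theta_cons a w x : theta (a :: w) x = fsubst (theta w) (theta_letter a x).
Proof. by rewrite /theta /= foldl_theta fsubst_cons /= cats0. Qed.

Lemma theta_cat u w x : theta (u ++ w) x = fsubst (theta w) (theta u x).
Proof. by rewrite /theta foldl_cat foldl_theta. Qed.

Lemma theta_seq1 a x : theta [:: a] x = theta_letter a x.
Proof. by rewrite theta_cons fsubst1. Qed.

Definition theta_eq (u w : word) : Prop := forall x, feq (theta u x) (theta w x).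

Lemma theta_eq_refl u : theta_eq u u.
Proof. by []. Qed.

Lemma theta_eq_sym u w : theta_eq u w -> theta_eq w u.
Proof. by move=> eq_uw x; rewrite /feq eq_uw. Qed.

Lemma theta_eq_trans u v w : theta_eq u v -> theta_eq v w -> theta_eq u w.
Proof. by move=> eq_uv eq_vw x; rewrite /feq eq_uv eq_vw. Qed.

Lemma theta_eq_cat u u' w w' :
  theta_eq u u' -> theta_eq w w' -> theta_eq (u ++ w) (u' ++ w').
Proof.
move=> eq_u eq_w x; rewrite !theta_cat.
by rewrite /feq (feq_fsubst _ (eq_u x)); apply: feq_fsubst_fun.
Qed.

Ltac split_indices :=
  repeat (first
    [ progress (rewrite /fsubst /finv /= ?eqxx /=)
    | match goal with |- context [@eq_op _ ?a ?b] =>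
        let T := type of a in unify T nat;
        case: (eqVneq a b) => ?; [ first [ exfalso; lia | subst | idtac ] | idtac ]
      end ]).

Ltac unfold_theta :=
  rewrite /feq /theta /= /theta_letter /theta_gen /= /theta_rho /theta_sigma.

Lemma theta_letterK a x :
  feq (fsubst (theta_letter a) (theta_letter a x)) [:: (false, x)].
Proof.
case: a => s [[] i]; case: x => [[] m]; unfold_theta; split_indices.
all: by try (exfalso; lia).
Qed.

Lemma theta_eq_cancel a b : a.2 = b.2 -> theta_eq [:: a; b] [::].
Proof.
move=> ab_gen x; rewrite theta_cons (eq_fsubst (theta_seq1 b)).
by rewrite /theta_letter -ab_gen; apply: theta_letterK.
Qed.

Lemma theta_eq_winv u : theta_eq (u ++ winv u) [::].
Proof.
elim: u => [|a u IHu] //.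
have -> : (a :: u) ++ winv (a :: u) = [:: a] ++ (u ++ winv u) ++ [:: linv a].
  by rewrite /winv /= rev_cons -cats1 -catA.
apply: theta_eq_trans (theta_eq_cancel (a := a) (b := linv a) _) => //.
exact: theta_eq_cat (theta_eq_refl _) (theta_eq_cat IHu (theta_eq_refl _)).
Qed.

Lemma fvb_rel_theta n u v : fvb_rel n u v -> theta_eq u v.
Proof.
case=> [i j _ _ ?|i j _ _ ?|i j _ _ ?|i _|i _|i _|i _|i _];
  try exact: theta_eq_cancel.
all: case=> [[] m]; unfold_theta; split_indices.
all: by try (exfalso; lia).
Qed.

Lemma fvb_eqv_theta n u v : fvb_eqv n u v -> theta_eq u v.
Proof.
elim=> {u v} [u|u v _|u v w _ eq_uv _ eq_vw|a b u v _ _ _ eq_uv|x _|u v].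
- by [].
- exact: theta_eq_sym.
- exact: theta_eq_trans eq_uv eq_vw.
- by do 2?apply: theta_eq_cat.
- exact: theta_eq_cancel.
- exact: fvb_rel_theta.
Qed.

(** * The relator acts trivially *)

Definition shift_letter k (a : letter) : letter := (a.1, (a.2.1, a.2.2 + k)).
Definition shift_var k (x : var) : var := (x.1, x.2 + k).
Definition shift_fletter k (a : fletter) : fletter := (a.1, shift_var k a.2).

Lemma theta_letter_shift k a x :
  theta_letter (shift_letter k a) (shift_var k x)
  = map (shift_fletter k) (theta_letter a x).
Proof.
case: a => s [[] i]; case: x => [b m];
rewrite /theta_letter /theta_gen /theta_rho /theta_sigma /= -!addSn !eqn_add2r;
by repeat case: ifP.
Qed.

Lemma finv_shift k u : finv (map (shift_fletter k) u) = map (shift_fletter k) (finv u).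
Proof. by rewrite /finv map_rev -!map_comp. Qed.

Lemma fsubst_shift k f g u :
  (forall x, g (shift_var k x) = map (shift_fletter k) (f x)) ->
  fsubst g (map (shift_fletter k) u) = map (shift_fletter k) (fsubst f u).
Proof.
move=> gf; elim: u => [|[s x] u IHu] //=.
rewrite fsubst_cons [fsubst f _]fsubst_cons map_cat IHu /= gf.
by case: s; rewrite ?finv_shift.
Qed.

Lemma theta_shift k w x :
  theta (map (shift_letter k) w) (shift_var k x) = map (shift_fletter k) (theta w x).
Proof.
elim: w x => [|a w IHw] x //=.
by rewrite !theta_cons theta_letter_shift; apply: fsubst_shift.
Qed.

Lemma fred_shift k u : fred (map (shift_fletter k) u) = map (shift_fletter k) (fred u).
Proof.
elim: u => [|a u IHu] //=; rewrite IHu.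
case: (fred u) => [|b r] //=.
by case: a b => [s [c m]] [s' [c' m']]; rewrite /= !xpair_eqE eqn_add2r; case: ifP.
Qed.

Lemma theta_far w x :
  all (fun a : letter => (x.2 != a.2.2) && (x.2 != a.2.2.+1)) w ->
  theta w x = [:: (false, x)].
Proof.
elim: w => [|a w IHw] //= /andP[/andP[xa xa1] far_w].
rewrite theta_cons.
have -> : theta_letter a x = [:: (false, x)].
  case: a xa xa1 => s [[] i]; case: x {IHw far_w} => b m /= xa xa1;
  by rewrite /theta_letter /theta_gen /theta_rho /theta_sigma /= (negbTE xa) (negbTE xa1) ?andbF.
by rewrite fsubst_cons /= cats0 IHw.
Qed.

Lemma relator6_shift i : 1 <= i -> relator6 i = map (shift_letter i.-1) (relator6 1).
Proof. by case: i. Qed.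

Lemma relator6_theta i : 1 <= i -> theta_eq (relator6 i) [::].
Proof.
move=> i_gt0 [b m].
have [near|far] := boolP (i <= m <= i.+2).
  have [d d_small ->] : exists2 d, 0 < d < 4 & m = d + i.-1 by exists (m - i.-1); lia.
  rewrite /feq relator6_shift // (theta_shift _ _ (b, d)) fred_shift.
  (* the case i = 1, by computation *)
  by case: d d_small => [|[|[|[|]]]] //; case: b.
rewrite theta_far //=.
have /and3P[-> -> ->] : [&& m != i, m != i.+1 & m != i.+2] by lia.
by [].
Qed.

Lemma inN_theta n w : inN n w -> theta_eq w [::].
Proof.
elim=> {w} [i /andP[i_gt0 _]|//|u v _ eq_u _ eq_v|u _ eq_u|g u _ _ eq_u|u v eq_uv _ eq_u].
- exact: relator6_theta.
- exact: theta_eq_cat eq_u eq_v.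
- apply: theta_eq_trans (theta_eq_winv u).
  exact: theta_eq_sym (theta_eq_cat (u' := [::]) eq_u (theta_eq_refl _)).
- apply: theta_eq_trans (theta_eq_winv g).
  exact: theta_eq_cat (theta_eq_refl _) (theta_eq_cat (u' := [::]) eq_u (theta_eq_refl _)).
- exact: theta_eq_trans (theta_eq_sym (fvb_eqv_theta eq_uv)) eq_u.
Qed.

(** * Reading iota1 and iota2 off theta *)

Definition tswapS (i j : nat) : nat := if j == i then i.+1 else if j == i.+1 then i else j.

Fixpoint word_act (f : gen -> nat -> nat) (w : word) (j : nat) : nat :=
  if w is a :: w' then word_act f w' (f a.2 j) else j.

Definition x_act (g : gen) : nat -> nat := tswapS g.2.
Definition y_act (g : gen) : nat -> nat := if g.1 then tswapS g.2 else id.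

Lemma theta_y w k : theta w (true, k) = [:: (false, (true, word_act y_act w k))].
Proof.
elim: w k => [|a w IHw] k //; rewrite theta_cons.
have -> : theta_letter a (true, k) = [:: (false, (true, y_act a.2 k))].
  case: a => s [[] i]; rewrite /theta_letter /theta_gen /theta_rho /theta_sigma;
  by rewrite /y_act /tswapS /=; repeat case: ifP.
by rewrite fsubst_cons /= cats0 IHw.
Qed.

Definition is_yletter (a : fletter) : bool := a.2.1.

Lemma all_y_fsubst_theta w u :
  all is_yletter u -> all is_yletter (fsubst (theta w) u).
Proof.
elim: u => [|[s [[] k]] u IHu] //= y_u.
by rewrite fsubst_cons all_cat IHu // andbT theta_y; case: s.
Qed.

Definition single_x (m : nat) (u : fword) : Prop :=
  exists ys1 ys2, [/\ all is_yletter ys1, all is_yletter ys2 & u = ys1 ++ X m :: ys2].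

Lemma theta_x w k : single_x (word_act x_act w k) (theta w (false, k)).
Proof.
elim: w k => [|a w IHw] k; first by exists [::], [::].
rewrite theta_cons.
have [ys1 [ys2 [y1 y2 ->]]] : single_x (x_act a.2 k) (theta_letter a (false, k)).
  case: a => s [[] i]; rewrite /theta_letter /theta_gen /theta_rho /theta_sigma /x_act /tswapS /=.
    by case: ifP => _; [|case: ifP => _]; exists [::], [::].
  case: ifP => _; first by exists [::], [:: Y i.+1].
  case: ifP => _; first by exists [::], [:: Yinv i.+1].
  by exists [::], [::].
have [zs1 [zs2 [z1 z2 theta_wx]]] := IHw (x_act a.2 k).
rewrite fsubst_cat fsubst_cons /= theta_wx.
exists (fsubst (theta w) ys1 ++ zs1), (zs2 ++ fsubst (theta w) ys2).
by rewrite !all_cat z1 z2 !all_y_fsubst_theta // -!catA.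
Qed.

Lemma fred_theta_x_fixed w j :
  fred (theta w (false, j)) = [:: X j] -> word_act x_act w j = j.
Proof.
have [ys1 [ys2 [y1 y2 theta_wj]]] := theta_x w j.
set P := fun a : fletter => a.2 == (false, word_act x_act w j).
have P_var (a b : fletter) : a.2 = b.2 -> P a = P b by rewrite /P => ->.
have count_y ys : all is_yletter ys -> count P ys = 0.
  by elim: ys => [|[s [[] k]] ys IHys] //= /IHys ->.
move=> fred_wj; have := odd_count_fred (theta w (false, j)) P_var.
rewrite fred_wj theta_wj count_cat /= count_y // count_y // /P /= eqxx /= addn0.
by rewrite xpair_eqE /=; case: eqP.
Qed.

Lemma transpV n i : (transp n i)^-1%g = transp n i.
Proof.
rewrite /transp; case: insub => [a|]; last by rewrite invg1.
by case: insub => [b|]; rewrite ?tpermV ?invg1.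
Qed.

Lemma transp_val n i (x : 'I_n) : 1 <= i <= n.-1 ->
  (val (transp n i x)).+1 = tswapS i (val x).+1.
Proof.
move=> i_range; rewrite /transp.
case: insubP => [a _ val_a|]; last by lia.
case: insubP => [b _ val_b|]; last by lia.
rewrite /tswapS; case: tpermP => [->|->|xa xb].
- by rewrite val_b val_a; repeat case: eqP; lia.
- by rewrite val_b val_a; repeat case: eqP; lia.
have x_a : val x <> i.-1 by move=> x_a; apply: xa; apply: val_inj; rewrite x_a val_a.
have x_b : val x <> i by move=> x_b; apply: xb; apply: val_inj; rewrite x_b val_b.
by repeat case: eqP => ? //; lia.
Qed.

Lemma word_perm_val n (F : gen -> {perm 'I_n}) f w (x : 'I_n) :
  (forall g, (F g)^-1%g = F g) ->
  (forall g (y : 'I_n), 1 <= g.2 <= n.-1 -> (val (F g y)).+1 = f g (val y).+1) ->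
  valid n w -> (val (word_perm F w x)).+1 = word_act f w (val x).+1.
Proof.
move=> FV F_val; elim: w x => [|a w IHw] x; first by rewrite /= perm1.
move=> /= /andP[a_valid w_valid].
by rewrite permM fun_if FV if_same IHw // F_val.
Qed.

Lemma iota1_val n w (x : 'I_n) :
  valid n w -> (val (iota1 n w x)).+1 = word_act x_act w (val x).+1.
Proof. by apply: word_perm_val => [g|g y]; [apply: transpV | apply: transp_val]. Qed.

Lemma iota2_val n w (x : 'I_n) :
  valid n w -> (val (iota2 n w x)).+1 = word_act y_act w (val x).+1.
Proof.
apply: word_perm_val => [[[] i]|[[] i] y] /=; rewrite /gen_perm2 /= ?transpV ?invg1 //.
  exact: transp_val.
by rewrite perm1.
Qed.

Theorem corollary1 (n : nat) : 3 <= n ->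
  (forall w : word, valid n w -> inN n w -> in_ker_theta n w) /\
  (forall w : word, valid n w -> in_ker_theta n w ->
     iota1 n w = 1%g /\ iota2 n w = 1%g).
Proof.
move=> _; split=> [w _ /inN_theta w_triv b j _ | w w_valid w_ker]; first exact: w_triv.
have x_range (x : 'I_n) : 1 <= (val x).+1 <= n by rewrite /= ltn_ord.
split; apply/permP => x; apply/val_inj/succn_inj; rewrite perm1.
  by rewrite iota1_val // fred_theta_x_fixed // w_ker.
have := w_ker true _ (x_range x).
by rewrite iota2_val // theta_y => -[].
Qed.
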